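(* Let $\varphi=\nu\tilde n.\sigma$ be a frame and $\mathtt{s}\in\tilde n$ a restricted name of $\varphi$ such that $\varphi\nvdash\mathtt{s}$. If $\varphi$ is a well-formed frame with respect to $\mathtt{s}$, then it is an extended well-formed frame with respect to $\mathtt{s}$.
   Context: Terms over $\Sigma=\{\mathsf{enc}/3,\mathsf{dec}/2,\mathsf{enca}/3,\mathsf{deca}/2,\mathsf{pub}/1,\mathsf{priv}/1,\langle\cdot,\cdot\rangle/2,\pi_1/1,\pi_2/1,\mathsf{sign}/2,\mathsf{check}/3,\mathsf{retrieve}/1\}$, constants, names, variables; destructors are $\pi_1,\pi_2,\mathsf{dec},\mathsf{deca},\mathsf{check},\mathsf{retrieve}$. Equational theory $E$: $\pi_i(\langle z_1,z_2\rangle)=z_i$, $\mathsf{dec}(\mathsf{enc}(z_1,z_2,z_3),z_2)=z_1$, $\mathsf{deca}(\mathsf{enca}(z_1,\mathsf{pub}(z_2),z_3),\mathsf{priv}(z_2))=z_1$, $\mathsf{check}(z_1,\mathsf{sign}(z_1,\mathsf{priv}(z_2)),\mathsf{pub}(z_2))=\mathsf{ok}$, $\mathsf{retrieve}(\mathsf{sign}(z_1,z_2))=z_1$; orienting left to right gives a convergent rewrite system with normal forms. Positions: sequences of positive integers, prefix order $\le$, $T|_p$ subterm, $\mathrm{head}(T)$ root symbol. Frame $\varphi=\nu\tilde n.\sigma$: restricted names $\tilde n$, acyclic substitution $\sigma$. $\varphi\vdash M$: least relation containing $x\sigma$ ($x\in\mathrm{dom}(\sigma)$), names outside $\tilde n$,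 closed under symbols other than $\mathsf{priv}$ and under $=_E$. An encryption occurrence $q$ in $U$ (head of $U|_q$ in $\{\mathsf{enc},\mathsf{enca}\}$) is an agent encryption w.r.t. names $\tilde m$ if $U|_{q\cdot3}\in\tilde m$, a probabilistic encryption w.r.t. a set of terms $S$ if for all $V\in S$ and $p$ with $V|_p=U|_{q\cdot3}$, $p=q'\cdot3$ with $V|_{q'}=U|_q$, and it is plaintext-above a position $q_T$ if $q\cdot1\le q_T$. Well-formed w.r.t. $\mathtt{s}$: (1) every encryption in $\sigma$ is an agent encryption w.r.t. $\tilde n\setminus\{\mathtt{s}\}$ and probabilistic w.r.t. $\mathrm{ran}(\sigma)$; (2) for all subterms $\mathsf{enc}(M,K,R)$, $\mathsf{enca}(M',K',R')$, $\mathsf{sign}(U,V)$, $\mathsf{pub}(W)$, $\mathsf{priv}(W')$ of $\varphi$, $\mathtt{s}$ does not occur in $K,K',V,W,W',R,R'$; (3) no destructor occurs in $\varphi$. Extended well-formed w.r.t. $\mathtt{s}$: (1) all terms of $\sigma$ are in normal form; (2) every agent encryption w.r.t. $\tilde n$ in $\sigma$ is probabilistic w.r.t. $\mathrm{ran}(\sigma)$; (3) for every occurrence $q_{\mathtt{s}}$ of $\mathtt{s}$ in $y\sigma$, $y\in\mathrm{dom}(\sigma)$, some agent encryption w.r.t. $\tilde n\setminus\{\mathtt{s}\}$ is plaintext-above $q_{\mathtt{s}}$; (4) the lowest such encryption $q_0$ satisfies $\mathrm{head}(y\sigma|_q)\in\{\langle\rangle,\mathsf{sign}\}$ for all $q_0<q<q_{\mathtt{s}}$.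 *)

From Stdlib Require Import List Arith Relations.
Import ListNotations.

Inductive term : Type :=
| TName (n : nat)
| TVar (x : nat)
| TCst (c : nat)
| Enc (m k r : term)
| Dec (c k : term)
| Enca (m k r : term)
| Deca (c k : term)
| Pub (a : term)
| Priv (a : term)
| Pair (a b : term)
| Proj1 (a : term)
| Proj2 (a : term)
| Sign (m k : term)
| Check (m s k : term)
| Retrieve (a : term).

Definition ok : term := TCst 0.

Inductive sym : Type :=
| SName (n : nat) | SVar (x : nat) | SCst (c : nat)
| SEnc | SDec | SEnca | SDeca | SPub | SPriv | SPair | SProj1 | SProj2
| SSign | SCheck | SRetrieve.

Definition head (t : term) : sym :=
  match t with
  | TName n => SName n | TVar x => SVar x | TCst c => SCst c
  | Enc _ _ _ => SEnc | Dec _ _ => SDec | Enca _ _ _ => SEnca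
  | Deca _ _ => SDeca | Pub _ => SPub | Priv _ => SPriv | Pair _ _ => SPair
  | Proj1 _ => SProj1 | Proj2 _ => SProj2 | Sign _ _ => SSign
  | Check _ _ _ => SCheck | Retrieve _ => SRetrieve
  end.

Definition args (t : term) : list term :=
  match t with
  | TName _ | TVar _ | TCst _ => []
  | Enc a b c | Enca a b c | Check a b c => [a; b; c]
  | Dec a b | Deca a b | Pair a b | Sign a b => [a; b]
  | Pub a | Priv a | Proj1 a | Proj2 a | Retrieve a => [a]
  end.

Definition is_destructor (f : sym) : Prop :=
  match f with
  | SProj1 | SProj2 | SDec | SDeca | SCheck | SRetrieve => True
  | _ => False
  end.

Definition is_fsym (f : sym) : Prop :=
  match f with SName _ | SVar _ => False | _ => True end.

(* positions are sequences of positive integers; argument i is numbered from 1 *)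
Definition position := list nat.

Fixpoint subterm_at (t : term) (p : position) : option term :=
  match p with
  | [] => Some t
  | i :: p' =>
      match i with
      | 0 => None
      | S j => match nth_error (args t) j with
               | Some u => subterm_at u p'
               | None => None
               end
      end
  end.

Definition pos_le (q p : position) : Prop := exists r, p = q ++ r.
Definition pos_lt (q p : position) : Prop := pos_le q p /\ q <> p.

Definition is_subterm (u t : term) : Prop := exists p, subterm_at t p = Some u.

Definition name_occurs (a : nat) (t : term) : Prop := is_subterm (TName a) t.

Inductive rule : term -> term -> Prop :=
| r_proj1 z1 z2 : rule (Proj1 (Pair z1 z2)) z1
| r_proj2 z1 z2 : rule (Proj2 (Pair z1 z2)) z2
| r_dec z1 z2 z3 : rule (Dec (Enc z1 z2 z3) z2) z1
| r_deca z1 z2 z3 : rule (Deca (Enca z1 (Pub z2) z3) (Priv z2)) z1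
| r_check z1 z2 : rule (Check z1 (Sign z1 (Priv z2)) (Pub z2)) ok
| r_retrieve z1 z2 : rule (Retrieve (Sign z1 z2)) z1.

Inductive rstep : term -> term -> Prop :=
| rs_root t u : rule t u -> rstep t u
| rs_ctx t u l1 a b l2 :
    head t = head u ->
    args t = l1 ++ a :: l2 -> args u = l1 ++ b :: l2 ->
    rstep a b -> rstep t u.

Definition eqE : relation term := clos_refl_sym_trans term rstep.

Definition normal_form (t : term) : Prop := forall u, ~ rstep t u.

Record frame : Type := Frame {
  fnames : list nat;
  fsubst : list (nat * term)
}.

Definition dom (sg : list (nat * term)) : list nat := map fst sg.

Fixpoint lookup (sg : list (nat * term)) (x : nat) : option term :=
  match sg with
  | [] => None
  | (y, t) :: sg' => if Nat.eqb x y then Some t else lookup sg' x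
  end.

Fixpoint subst1 (sg : list (nat * term)) (t : term) : term :=
  match t with
  | TVar x => match lookup sg x with Some u => u | None => TVar x end
  | TName n => TName n
  | TCst c => TCst c
  | Enc a b c => Enc (subst1 sg a) (subst1 sg b) (subst1 sg c)
  | Dec a b => Dec (subst1 sg a) (subst1 sg b)
  | Enca a b c => Enca (subst1 sg a) (subst1 sg b) (subst1 sg c)
  | Deca a b => Deca (subst1 sg a) (subst1 sg b)
  | Pub a => Pub (subst1 sg a)
  | Priv a => Priv (subst1 sg a)
  | Pair a b => Pair (subst1 sg a) (subst1 sg b)
  | Proj1 a => Proj1 (subst1 sg a)
  | Proj2 a => Proj2 (subst1 sg a)
  | Sign a b => Sign (subst1 sg a) (subst1 sg b)
  | Check a b c => Check (subst1 sg a) (subst1 sg b) (subst1 sg c)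
  | Retrieve a => Retrieve (subst1 sg a)
  end.

Definition acyclic (sg : list (nat * term)) : Prop :=
  exists rank : nat -> nat,
    forall x t y, lookup sg x = Some t -> In y (dom sg) ->
      is_subterm (TVar y) t -> rank y < rank x.

(* t sigma: sigma applied until fixpoint (|sigma| applications suffice for
   an acyclic sigma) *)
Definition app_subst (sg : list (nat * term)) (t : term) : term :=
  Nat.iter (length sg) (subst1 sg) t.

Definition xsig (F : frame) (x : nat) : term := app_subst (fsubst F) (TVar x).

Definition ran (F : frame) (V : term) : Prop :=
  exists x, In x (dom (fsubst F)) /\ V = xsig F x.

Inductive deduces (F : frame) : term -> Prop :=
| ded_var x : In x (dom (fsubst F)) -> deduces F (xsig F x)
| ded_name a : ~ In a (fnames F) -> deduces F (TName a)
| ded_app t : is_fsym (head t) -> head t <> SPriv ->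
    (forall a, In a (args t) -> deduces F a) -> deduces F t
| ded_eq t u : deduces F t -> eqE t u -> deduces F u.

Definition enc_occ (U : term) (q : position) : Prop :=
  exists T, subterm_at U q = Some T /\ (head T = SEnc \/ head T = SEnca).

Definition agent_enc (m : nat -> Prop) (U : term) (q : position) : Prop :=
  enc_occ U q /\ exists a, subterm_at U (q ++ [3]) = Some (TName a) /\ m a.

Definition prob_enc (S : term -> Prop) (U : term) (q : position) : Prop :=
  enc_occ U q /\
  forall V p R, S V -> subterm_at U (q ++ [3]) = Some R ->
    subterm_at V p = Some R ->
    exists q', p = q' ++ [3] /\ subterm_at V q' = subterm_at U q.

Definition plaintext_above (q qT : position) : Prop := pos_le (q ++ [1]) qT.

Definition restricted (F : frame) (a : nat) : Prop := In a (fnames F).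
Definition restricted_but (F : frame) (s : nat) (a : nat) : Prop :=
  In a (fnames F) /\ a <> s.

Definition frame_subterm (F : frame) (T : term) : Prop :=
  exists y, In y (dom (fsubst F)) /\ is_subterm T (xsig F y).

Definition well_formed (F : frame) (s : nat) : Prop :=
  (forall y q, In y (dom (fsubst F)) -> enc_occ (xsig F y) q ->
      agent_enc (restricted_but F s) (xsig F y) q /\
      prob_enc (ran F) (xsig F y) q)
  /\
  (forall T, frame_subterm F T ->
      match T with
      | Enc _ K R => ~ name_occurs s K /\ ~ name_occurs s R
      | Enca _ K R => ~ name_occurs s K /\ ~ name_occurs s R
      | Sign _ V => ~ name_occurs s V
      | Pub W => ~ name_occurs s W
      | Priv W => ~ name_occurs s W
      | _ => True
      end)
  /\
  (forall T, frame_subterm F T -> ~ is_destructor (head T)).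

Definition ext_well_formed (F : frame) (s : nat) : Prop :=
  (forall y, In y (dom (fsubst F)) -> normal_form (xsig F y))
  /\
  (forall y q, In y (dom (fsubst F)) ->
      agent_enc (restricted F) (xsig F y) q -> prob_enc (ran F) (xsig F y) q)
  /\
  (forall y qs, In y (dom (fsubst F)) ->
      subterm_at (xsig F y) qs = Some (TName s) ->
      (exists q, agent_enc (restricted_but F s) (xsig F y) q /\
                 plaintext_above q qs)
      /\
      (forall q0, agent_enc (restricted_but F s) (xsig F y) q0 ->
         plaintext_above q0 qs ->
         (forall q, agent_enc (restricted_but F s) (xsig F y) q ->
            plaintext_above q qs -> pos_le q q0) ->
         forall q, pos_lt q0 q -> pos_lt q qs ->
           exists T, subterm_at (xsig F y) q = Some T /\
                     (head T = SPair \/ head T = SSign))).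

(* Rewrite redexes are headed by destructors, and a well-formed frame contains
   none, so its terms are in normal form.  Condition (2) keeps [s] out of keys,
   random seeds, signing keys and the arguments of [pub]/[priv], so on the
   path from the root of [x sigma] down to an occurrence of [s] every node is
   a pair, the message of a signature, or an encryption whose plaintext leads
   to [s].  Pairs and signed messages can be opened by the attacker: without
   an encryption above it, [s] would be deducible.  Every encryption of the
   frame is an agent encryption, so below the lowest one above [s] no further
   encryption occurs on the path, leaving only pairs and signatures. *)
From Stdlib Require Import List Arith Lia Relations.
Import ListNotations.

Lemma subterm_at_app t p r :
  subterm_at t (p ++ r) =
  match subterm_at t p with Some T => subterm_at T r | None => None end.
Proof.
  revert t; induction p as [|[|j] p IH]; intro t; [reflexivity | reflexivity |].
  simpl; destruct (nth_error (args t) j); [apply IH | reflexivity].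
Qed.

Lemma pos_le_antisym q q' : pos_le q q' -> pos_le q' q -> q = q'.
Proof.
  intros [r1 ->] [r2 H].
  assert (Hlen : length q = length ((q ++ r1) ++ r2)) by now f_equal.
  rewrite !length_app in Hlen.
  destruct r1; [now rewrite app_nil_r | simpl in Hlen; lia].
Qed.

Lemma enc_occ_subterm U p T q :
  subterm_at U p = Some T -> enc_occ T q -> enc_occ U (p ++ q).
Proof.
  intros HT [T' [HT' Henc]]; exists T'; split; [|exact Henc].
  now rewrite subterm_at_app, HT.
Qed.

Lemma rstep_destructor_subterm t u :
  rstep t u -> exists p T, subterm_at t p = Some T /\ is_destructor (head T).
Proof.
  induction 1 as [t u Hr | t u l1 a b l2 _ Ha _ _ IH].
  - exists [], t; split; [reflexivity | now inversion Hr].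
  - destruct IH as [p [T [HT D]]]; exists (S (length l1) :: p), T; split; [|exact D].
    simpl; rewrite Ha, nth_error_app2, Nat.sub_diag by lia; exact HT.
Qed.

Lemma destructor_free_normal_form t :
  (forall p T, subterm_at t p = Some T -> ~ is_destructor (head T)) ->
  normal_form t.
Proof.
  intros Hfree u Hstep.
  destruct (rstep_destructor_subterm _ _ Hstep) as [p [T [HT D]]].
  exact (Hfree p T HT D).
Qed.

Lemma deduces_reduct F t u :
  is_fsym (head t) -> head t <> SPriv ->
  (forall a, In a (args t) -> deduces F a) -> rule t u -> deduces F u.
Proof.
  intros Hf Hpriv Hargs Hr.
  apply ded_eq with t; [now apply ded_app | now apply rst_step, rs_root].
Qed.

(* The arguments of a term that the attacker can extract with a destructor. *)
Definition transparent_arg (T : term) (j : nat) : Prop :=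
  head T = SPair \/ (head T = SSign /\ j = 0).

Lemma deduces_transparent_arg F T j c :
  deduces F T -> transparent_arg T j -> nth_error (args T) j = Some c ->
  deduces F c.
Proof.
  intros D [HT | [HT ->]] Hc; destruct T; try discriminate HT.
  - destruct j as [|[|j]]; simpl in Hc; [| | destruct j; discriminate];
      injection Hc as <-.
    + apply deduces_reduct with (Proj1 (Pair T1 T2)); try easy;
        [intros a [<- | []]; exact D | constructor].
    + apply deduces_reduct with (Proj2 (Pair T1 T2)); try easy;
        [intros a [<- | []]; exact D | constructor].
  - injection Hc as <-.
    apply deduces_reduct with (Retrieve (Sign T1 T2)); try easy;
      [intros a [<- | []]; exact D | constructor].
Qed.

Lemma frame_subterm_arg F T j c :
  frame_subterm F T -> nth_error (args T) j = Some c -> frame_subterm F c.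
Proof.
  intros [y [Hy [p Hp]]] Hc; exists y; split; [exact Hy|].
  exists (p ++ [S j]); rewrite subterm_at_app, Hp; simpl; now rewrite Hc.
Qed.

Section WellFormed.

Variables (F : frame) (s : nat).
Hypothesis WF : well_formed F s.

Lemma wf_secret_arg T j c :
  frame_subterm F T -> nth_error (args T) j = Some c -> name_occurs s c ->
  (enc_occ T [] /\ j = 0) \/ transparent_arg T j.
Proof.
  destruct WF as [_ [Wkeys Wdestr]]; intros FT Hc Hsc.
  pose proof (Wkeys T FT) as K; pose proof (Wdestr T FT) as D.
  unfold transparent_arg, enc_occ.
  destruct T; simpl in Hc, K, D;
    try (exfalso; apply D; exact I);
    destruct j as [|[|[|j]]]; simpl in Hc;
    try discriminate; try (destruct j; discriminate);
    injection Hc as <-; try tauto.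
  all: left; split; [eexists; split; [reflexivity | simpl; tauto] | reflexivity].
Qed.

Lemma wf_normal_form y : In y (dom (fsubst F)) -> normal_form (xsig F y).
Proof.
  intro Hy; apply destructor_free_normal_form; intros p T HT.
  apply (proj2 (proj2 WF)); exists y; split; [exact Hy | now exists p].
Qed.

Lemma wf_secret_under_encryption p t :
  ~ deduces F (TName s) ->
  frame_subterm F t -> deduces F t -> subterm_at t p = Some (TName s) ->
  exists q, enc_occ t q /\ plaintext_above q p.
Proof.
  intro Hsecret; revert t; induction p as [|[|j] p IH]; intros t Ft Dt Hs.
  - injection Hs as ->; contradiction.
  - discriminate.
  - simpl in Hs; destruct (nth_error (args t) j) as [c|] eqn:Hc; [|discriminate].
    destruct (wf_secret_arg t j c Ft Hc (ex_intro _ p Hs))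
      as [[Henc ->] | Htransp].
    + exists []; split; [exact Henc | now exists p].
    + destruct (IH c (frame_subterm_arg _ _ _ _ Ft Hc)
                  (deduces_transparent_arg _ _ _ _ Dt Htransp Hc) Hs)
        as [q [Henc [r Hr]]].
      exists (S j :: q); split.
      * apply (enc_occ_subterm t [S j] c); [simpl; now rewrite Hc | exact Henc].
      * exists r; simpl; now rewrite Hr.
Qed.

Lemma wf_below_lowest_guard y q0 qs :
  In y (dom (fsubst F)) -> subterm_at (xsig F y) qs = Some (TName s) ->
  (forall q, agent_enc (restricted_but F s) (xsig F y) q ->
     plaintext_above q qs -> pos_le q q0) ->
  forall q, pos_lt q0 q -> pos_lt q qs ->
  exists T, subterm_at (xsig F y) q = Some T /\
            (head T = SPair \/ head T = SSign).
Proof.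
  intros Hy Hs Hlowest q [Hq0 Hneq] [[r ->] Hne].
  rewrite subterm_at_app in Hs.
  destruct (subterm_at (xsig F y) q) as [T|] eqn:HT; [|discriminate].
  destruct r as [|[|j] r]; [now rewrite app_nil_r in Hne | discriminate |].
  simpl in Hs; destruct (nth_error (args T) j) as [c|] eqn:Hc; [|discriminate].
  assert (FT : frame_subterm F T) by (exists y; split; [exact Hy | now exists q]).
  exists T; split; [reflexivity|].
  destruct (wf_secret_arg T j c FT Hc (ex_intro _ r Hs))
    as [[Henc ->] | [Hpair | [Hsign _]]]; [|tauto | tauto].
  (* an encryption here would be a lower agent encryption above [s] than [q0] *)
  exfalso; apply Hneq, pos_le_antisym; [exact Hq0|].
  apply Hlowest.
  - apply (proj1 WF y q Hy); rewrite <- (app_nil_r q).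
    exact (enc_occ_subterm _ _ _ _ HT Henc).
  - exists r; now rewrite <- app_assoc.
Qed.

End WellFormed.

Theorem lemma2p12 (F : frame) (s : nat) :
  acyclic (fsubst F) ->
  In s (fnames F) ->
  ~ deduces F (TName s) ->
  well_formed F s ->
  ext_well_formed F s.
Proof.
  intros _ _ Hsecret WF; split; [|split].
  - exact (wf_normal_form F s WF).
  - intros y q Hy [Henc _]; exact (proj2 (proj1 WF y q Hy Henc)).
  - intros y qs Hy Hs; split.
    + destruct (wf_secret_under_encryption F s WF qs (xsig F y) Hsecret)
        as [q [Henc Habove]];
        [exists y; split; [exact Hy | now exists []] | now apply ded_var | exact Hs |].
      exists q; split; [exact (proj1 (proj1 WF y q Hy Henc)) | exact Habove].
    + intros q0 _ _ Hlowest.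
      exact (wf_below_lowest_guard F s WF y q0 qs Hy Hs Hlowest).
Qed.
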